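(* Let $A=\mathbb{C}[x_1,x_2,\dots]$ and let $d:A\to A$ be the derivation with $dx_1=0$ and $dx_i=x_{i-1}$ for $i>1$. For any integers $n\ge\ell\ge1$, any $i\ge0$, and any $\beta=(\beta_1,\dots,\beta_\ell)\in B^{(\ell)}_n(i)$, $$d\,g_{(\beta_1,\dots,\beta_\ell)}(\vec x)=\begin{cases}0,& i=0,\\ g_{(\beta_1-1,\beta_2,\dots,\beta_\ell)}(\vec x),& i>0.\end{cases}$$
   Context: For $n\ge\ell\ge1$, $B^{(\ell)}_n=\{\beta=(\beta_1,\dots,\beta_\ell)\in\mathbb{Z}^\ell:\beta_1,\dots,\beta_{\ell-1}\ge0,\ \beta_\ell\ge1,\ \beta_1+2\beta_2+\cdots+\ell\beta_\ell=n\}$. For $i\ge0$ and $n\ge\ell>1$, $B^{(\ell)}_n(i)=\{\beta\in B^{(\ell)}_n:\beta_1=i\}$; for $\ell=1$, $B^{(1)}_n(i)=\{(i+1)\}$ if $n=i+1$ and $\emptyset$ otherwise. For $\vec k=(k_1,\dots,k_\ell)$, $e_j(\vec k)$ is the $j$-th elementary symmetric polynomial and $e^\beta(\vec k)=e_1(\vec k)^{\beta_1}\cdots e_\ell(\vec k)^{\beta_\ell}$. For $\beta\in B^{(\ell)}_n$ the polynomial $g_\beta(\vec x)\in A$ is defined by $$\sum_{\substack{i_1,\dots,i_\ell\ge1\\ i_1+\cdots+i_\ell=n}} k_1^{i_1}\cdots k_\ell^{i_\ell}x_{i_1}\cdots x_{i_\ell}=\sum_{\beta\in B^{(\ell)}_n}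 e^\beta(k_1,\dots,k_\ell)\,g_\beta(\vec x)$$ (in particular $g_{(m)}(\vec x)=x_m$ for $\ell=1$). *)

From HB Require Import structures.
From mathcomp Require Import all_boot all_order all_algebra all_field.
From mathcomp Require Import mpoly.
Set Implicit Arguments. Unset Strict Implicit. Unset Printing Implicit Defensive.
Import GRing.Theory.
Local Open Scope ring_scope.

(* A_m = C[x_1, ..., x_m]; the variable x_j (j >= 1) is 'X_(j-1).
   xv m j = x_j for 1 <= j <= m, and 0 otherwise (only used for j <= m). *)
Definition xv (m : nat) (j : nat) : {mpoly algC[m]} :=
  match j with
  | 0 => 0
  | j'.+1 => match insub j' with Some i => 'X_i | None => 0 end
  end.

(* beta (as a seq of length l, beta_1 = nth 0 beta 0) lies in B^(l)_n *)
Definition inB (n l : nat) (beta : seq nat) : bool :=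
  [&& size beta == l, 0 < l, 0 < nth 0 beta l.-1 &
      \sum_(j < l) j.+1 * nth 0 beta j == n]%N.

(* B^(l)_n(i), with the paper's special convention for l = 1 *)
Definition inBi (n l i : nat) (beta : seq nat) : bool :=
  if (1 < l)%N then inB n l beta && (nth 0 beta 0 == i)
  else (l == 1%N) && (beta == [:: i.+1]) && (n == i.+1).

Definition decr_head (beta : seq nat) : seq nat :=
  (nth 0 beta 0).-1 :: behead beta.

(* e^beta(k_1,...,k_l) in A[k_1,...,k_l], with k_j = 'X_(j-1) *)
Definition ebeta (A : comRingType) (l : nat) (beta : seq nat) : {mpoly A[l]} :=
  \prod_(j < l) mesym l A j.+1 ^+ nth 0 beta j.

Definition genS (m n l : nat) : {mpoly {mpoly algC[m]}[l]} :=
  \sum_(t : l.-tuple 'I_n.+1 |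
          [&& (\sum_(j < l) val (tnth t j) == n)%N & all (fun i : 'I_n.+1 => 0 < val i)%N t])
     \prod_(j < l) ('X_j ^+ val (tnth t j) * (xv m (val (tnth t j)))%:MP).

(* the defining identity of the polynomials g_beta, for given n, l *)
Definition g_identity (m : nat) (g : seq nat -> {mpoly algC[m]}) (n l : nat) : Prop :=
  genS m n l =
  \sum_(t : l.-tuple 'I_n.+1 | inB n l [seq val i | i <- t])
     ebeta _ l [seq val i | i <- t] * (g [seq val i | i <- t])%:MP.

From HB Require Import structures.
From mathcomp Require Import all_boot all_order all_algebra all_field.
From mathcomp Require Import mpoly zify.
Set Implicit Arguments. Unset Strict Implicit. Unset Printing Implicit Defensive.
Import GRing.Theory.
Local Open Scope ring_scope.

(* Extend d coefficientwise to polynomials in k_1, ..., k_l over A.  On the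
   generating sum S_n = \sum k_1^i_1 ... k_l^i_l x_i_1 ... x_i_l, d lowers one
   index i_p by one, so d(S_n) = e_1(k) S_(n-1).  The e_j(k) have constant
   coefficients, hence d commutes with the substitution y_j := e_j(k); writing
   S_n = \sum_beta g_beta e^beta and using that e_1, ..., e_l are algebraically
   independent, \sum_beta d(g_beta) y^beta = y_1 \sum_beta g_beta y^beta.
   Comparing the coefficients of y^beta gives the claim. *)

Definition mesyms (K : comNzRingType) (l : nat) : l.-tuple {mpoly K[l]} :=
  [tuple mesym l K i.+1 | i < l].

Lemma map_mpoly_comp_mesymsX (K L : comNzRingType) (f : {rmorphism K -> L})
    (l : nat) (mu : 'X_{1..l}) :
  map_mpoly f ('X_[mu] \mPo mesyms K l) = 'X_[mu] \mPo mesyms L l.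
Proof.
rewrite !comp_mpolyX rmorph_prod; apply: eq_bigr => i _.
rewrite rmorphXn !tnth_mktuple !mesymE rmorph_sum; congr (_ ^+ _).
by apply: eq_bigr => h _; exact: map_mpolyX.
Qed.

Section Derivation.

Variables (R : comNzRingType) (d : R -> R).
Hypothesis dD : {morph d : x y / x + y}.
Hypothesis dM : forall x y, d (x * y) = x * d y + d x * y.

Lemma derivation0 : d 0 = 0.
Proof. by apply: (addrI (d 0)); rewrite -dD !addr0. Qed.

Lemma derivation1 : d 1 = 0.
Proof.
have := dM 1 1; rewrite !mul1r mulr1 => d1.
by apply: (addrI (d 1)); rewrite -d1 addr0.
Qed.

Lemma derivation_big_prod (I : eqType) (r : seq I) (F : I -> R) : uniq r ->
  d (\prod_(i <- r) F i) = \sum_(i <- r) d (F i) * \prod_(j <- r | j != i) F j.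
Proof.
elim: r => [_|a r IHr /= /andP[a_r uniq_r]]; first by rewrite !big_nil derivation1.
rewrite !big_cons dM IHr // eqxx /= addrC; congr (_ + _).
  rewrite [in RHS]big_rmcond_in // => j j_r; rewrite negbK => /eqP eq_ja.
  by rewrite -eq_ja j_r in a_r.
rewrite mulr_sumr; apply: eq_big_seq => i i_r.
have a_neq_i : a != i by apply: contraNneq a_r => ->.
by rewrite big_cons a_neq_i mulrCA.
Qed.

#[local] HB.instance Definition _ := GRing.isNmodMorphism.Build R R d (derivation0, dD).

Lemma map_mpoly_derivationE (n : nat) (p : {mpoly R[n]}) :
  map_mpoly d p = \sum_(mu <- msupp p) d p@_mu *: 'X_[mu].
Proof.
by apply: eq_bigr => mu _; rewrite /= mmap1_id mul_mpolyC.
Qed.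

Lemma map_mpoly_derivationZ (n : nat) (c : R) (q : {mpoly R[n]}) :
  (forall mu, d q@_mu = 0) -> map_mpoly d (c *: q) = d c *: q.
Proof.
move=> dq0; apply/mpolyP => mu.
by rewrite mcoeff_map_mpoly /= !mcoeffZ dM dq0 mulr0 add0r.
Qed.

Lemma map_mpoly_derivation_comp_mesyms (K : comNzRingType) (f : {rmorphism K -> R})
    (l : nat) (p : {mpoly R[l]}) :
  (forall c, d (f c) = 0) ->
  map_mpoly d (p \mPo mesyms R l) = map_mpoly d p \mPo mesyms R l.
Proof.
move=> df0; rewrite comp_mpolyEX [map_mpoly d p]map_mpoly_derivationE !raddf_sum.
apply: eq_bigr => mu _; rewrite /= comp_mpolyZ map_mpoly_derivationZ // => nu.
by rewrite -(map_mpoly_comp_mesymsX f) mcoeff_map_mpoly df0.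
Qed.

End Derivation.

Definition mnm_of_seq (l : nat) (s : seq nat) : 'X_{1..l} := [multinom nth 0 s i | i < l].

Lemma mnm_of_seq_tuple (l n : nat) (t : l.-tuple 'I_n.+1) (j : 'I_l) :
  mnm_of_seq l [seq val i | i <- t] j = tnth t j.
Proof. by rewrite mnmE (nth_map ord0) ?size_tuple // -tnth_nth. Qed.

Lemma mnm_of_seq_tuple_inj (l n : nat) (t1 t2 : l.-tuple 'I_n.+1) :
  mnm_of_seq l [seq val i | i <- t1] = mnm_of_seq l [seq val i | i <- t2] -> t1 = t2.
Proof.
move=> eq_mnm; apply: eq_from_tnth => j; apply: val_inj.
by rewrite /= -!mnm_of_seq_tuple eq_mnm.
Qed.

Lemma mdeg_mnm_of_seq_tuple (l n : nat) (t : l.-tuple 'I_n.+1) :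
  mdeg (mnm_of_seq l [seq val i | i <- t]) = (\sum_(j < l) tnth t j)%N.
Proof. by rewrite mdegE; apply: eq_bigr => j _; rewrite mnm_of_seq_tuple. Qed.

Lemma tuple_of_seq (l n : nat) (s : seq nat) :
  size s = l -> (forall j, nth 0 s j <= n)%N ->
  exists t : l.-tuple 'I_n.+1, [seq val i | i <- t] = s.
Proof.
move=> size_s s_le_n.
have size_t : size [seq inord x : 'I_n.+1 | x <- s] == l by rewrite size_map size_s.
exists (Tuple size_t); rewrite /= -map_comp; apply: (@eq_from_nth _ 0%N).
  by rewrite size_map.
by move=> j; rewrite size_map => j_lt; rewrite (nth_map 0%N) //= inordK // ltnS.
Qed.

Lemma mnm_le_mdeg (l : nat) (mu : 'X_{1..l}) (j : 'I_l) : (mu j <= mdeg mu)%N.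
Proof. by rewrite mdegE (bigD1 j) //= leq_addr. Qed.

Lemma mdeg_subU (l : nat) (mu : 'X_{1..l}) (p : 'I_l) :
  (U_(p) <= mu)%MM -> mdeg mu = (mdeg (mu - U_(p))%MM).+1.
Proof. by move=> le_p_mu; rewrite -{1}(submK le_p_mu) mdegD mdeg1 addn1. Qed.

Lemma mcoeffXM (A : nzRingType) (l : nat) (nu mu : 'X_{1..l}) (q : {mpoly A[l]}) :
  ('X_[nu] * q)@_mu = if (nu <= mu)%MM then q@_(mu - nu)%MM else 0.
Proof.
rewrite -commr_mpolyX; case: ifP => [le_nu_mu | nle_nu_mu].
  by rewrite -{1}(submK le_nu_mu) addmC mcoeffMX.
apply: memN_msupp_eq0; rewrite (perm_mem (msuppMX q nu)).
apply/mapP => -[nu' _ mu_eq]; move/negP: nle_nu_mu; apply.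
by rewrite mu_eq; apply/mnm_lepP => j; rewrite mnmDE leq_addr.
Qed.

Lemma inB_size (n l : nat) (s : seq nat) : inB n l s -> size s = l.
Proof. by case/and4P => /eqP. Qed.

Lemma inB_term_le (n l : nat) (s : seq nat) (j : 'I_l) :
  inB n l s -> (j.+1 * nth 0 s j <= n)%N.
Proof. by case/and4P => _ _ _ /eqP <-; rewrite (bigD1 j) //= leq_addr. Qed.

Lemma inB_nth_le (n l : nat) (s : seq nat) (j : nat) : inB n l s -> (nth 0 s j <= n)%N.
Proof.
move=> sB; case: (ltnP j l) => [j_lt_l | l_le_j]; last by rewrite nth_default ?(inB_size sB).
by rewrite (leq_trans _ (inB_term_le (Ordinal j_lt_l) sB)) // leq_pmull.
Qed.

Lemma inB_leq (n l : nat) (s : seq nat) : inB n l s -> (l <= n)%N.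
Proof.
case: l => // l sB; have := inB_term_le (@ord_max l) sB.
by case/and4P: sB => _ _ last_s _; apply: leq_trans; rewrite leq_pmulr.
Qed.

Lemma inB_singleton (k : nat) : inB k.+1 1 [:: k.+1].
Proof. by rewrite /inB big_ord1 /= mul1n !eqxx. Qed.

Lemma inB_decr_head (n l : nat) (s : seq nat) :
  (1 < l)%N -> inB n l s -> (0 < nth 0 s 0)%N -> inB n.-1 l (decr_head s).
Proof.
case: l => [|[|l]] // _ /and4P[/eqP size_s _ last_s /eqP weight_s] s0_gt0.
case: s size_s last_s weight_s s0_gt0 => // s0 s [size_s] /= last_s weight_s s0_gt0.
rewrite /inB /= size_s eqxx /=; apply/andP; split=> //.
move: weight_s; rewrite !big_ord_recl /= => weight_s.
by apply/eqP; rewrite -weight_s; lia.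
Qed.

Definition gpoly (A : nzRingType) (n l : nat) (c : seq nat -> A) : {mpoly A[l]} :=
  \sum_(t : l.-tuple 'I_n.+1 | inB n l [seq val i | i <- t])
     c [seq val i | i <- t] *: 'X_[mnm_of_seq l [seq val i | i <- t]].

Lemma gpoly_comp_mesyms (A : comNzRingType) (n l : nat) (c : seq nat -> A) :
  gpoly n l c \mPo mesyms A l =
  \sum_(t : l.-tuple 'I_n.+1 | inB n l [seq val i | i <- t])
     ebeta A l [seq val i | i <- t] * (c [seq val i | i <- t])%:MP.
Proof.
rewrite raddf_sum; apply: eq_bigr => t _.
rewrite /= comp_mpolyZ comp_mpolyX -mul_mpolyC mulrC; congr (_ * _).
by apply: eq_bigr => j _; rewrite tnth_mktuple mnmE.
Qed.

Lemma mcoeff_gpoly (A : nzRingType) (n l : nat) (c : seq nat -> A) (s : seq nat) :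
  inB n l s -> (gpoly n l c)@_(mnm_of_seq l s) = c s.
Proof.
move=> sB; have [t t_s] := tuple_of_seq (inB_size sB) (fun j => inB_nth_le j sB).
rewrite -t_s in sB *.
rewrite raddf_sum (bigD1 t) //= mcoeffZ mcoeffX eqxx mulr1 big1 ?addr0 //.
move=> t' /andP[_ neq_t't]; rewrite mcoeffZ mcoeffX.
case: eqP => [/mnm_of_seq_tuple_inj eq_t't|_]; last by rewrite mulr0.
by rewrite eq_t't eqxx in neq_t't.
Qed.

Lemma gpoly_eq0 (A : nzRingType) (n l : nat) (c : seq nat -> A) :
  (n < l)%N -> gpoly n l c = 0.
Proof.
move=> n_lt_l; apply: big_pred0 => t; apply/negbTE/negP => /inB_leq.
by rewrite leqNgt n_lt_l.
Qed.

Definition xvprod (m l : nat) (mu : 'X_{1..l}) : {mpoly algC[m]} :=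
  \prod_(j < l) xv m (mu j).

(* The positivity of the indices in [genS] may be dropped: [xv m 0 = 0]. *)
Lemma genSE (m n l : nat) :
  genS m n l =
  \sum_(t : l.-tuple 'I_n.+1 | (\sum_(j < l) tnth t j == n)%N)
     xvprod m (mnm_of_seq l [seq val i | i <- t]) *: 'X_[mnm_of_seq l [seq val i | i <- t]].
Proof.
rewrite /genS big_mkcond [RHS]big_mkcond; apply: eq_bigr => t _.
have -> : \prod_(j < l) ('X_j ^+ tnth t j * (xv m (tnth t j))%:MP) =
          xvprod m (mnm_of_seq l [seq val i | i <- t]) *: 'X_[mnm_of_seq l [seq val i | i <- t]].
  rewrite big_split /= mulrC -mul_mpolyC rmorph_prod mpolyXE_id.
  by congr (_ * _); apply: eq_bigr => j _; rewrite mnm_of_seq_tuple.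
case: (_ == n)%N => //; case: (boolP (all _ t)) => // /allPn[i i_t].
rewrite lt0n negbK => /eqP i0.
have /tnthP[j i_j] := i_t.
by rewrite /xvprod (bigD1 j) //= mnm_of_seq_tuple -i_j i0 mul0r scale0r.
Qed.

Lemma mcoeff_genS (m n l : nat) (mu : 'X_{1..l}) :
  (genS m n l)@_mu = if mdeg mu == n then xvprod m mu else 0.
Proof.
rewrite genSE raddf_sum /=; under eq_bigr do rewrite mcoeffZ mcoeffX.
case: eqP => [deg_mu | deg_mu]; last first.
  apply: big1 => t /eqP sum_t; case: eqP => [mu_t|]; last by rewrite mulr0.
  by case: deg_mu; rewrite -mu_t mdeg_mnm_of_seq_tuple.
pose t0 : l.-tuple 'I_n.+1 := [tuple inord (mu j) | j < l].
have t0E : mnm_of_seq l [seq val i | i <- t0] = mu.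
  apply/mnmP => j; rewrite mnm_of_seq_tuple tnth_mktuple inordK //.
  by rewrite ltnS -deg_mu mnm_le_mdeg.
rewrite (bigD1 t0) ?t0E ?eqxx ?mulr1 /=; last by rewrite -mdeg_mnm_of_seq_tuple t0E deg_mu.
rewrite big1 ?addr0 // => t /andP[_ neq_tt0]; case: eqP => [mu_t|]; last by rewrite mulr0.
by rewrite -t0E in mu_t; rewrite (mnm_of_seq_tuple_inj mu_t) eqxx in neq_tt0.
Qed.

Lemma genS_eq0 (m n l : nat) : (n < l)%N -> genS m n l = 0.
Proof.
move=> n_lt_l; apply/mpolyP => mu; rewrite mcoeff_genS mcoeff0.
case: eqP => // deg_mu; have [j /eqP mu_j] : exists j, mu j == 0%N.
  apply/existsP; apply: contraLR n_lt_l; rewrite negb_exists -leqNgt -deg_mu => /forallP mu_gt0.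
  rewrite mdegE -{1}(card_ord l) -sum1_card; apply: leq_sum => j _.
  by rewrite lt0n mu_gt0.
by rewrite /xvprod (bigD1 j) //= mu_j mul0r.
Qed.

Lemma xvprod_subU (m l : nat) (mu : 'X_{1..l}) (p : 'I_l) :
  xvprod m (mu - U_(p))%MM = xv m (mu p).-1 * \prod_(j < l | j != p) xv m (mu j).
Proof.
rewrite /xvprod (bigD1 p) //= mnmBE mnm1E eqxx subn1; congr (_ * _).
by apply: eq_bigr => j; rewrite mnmBE mnm1E eq_sym => /negbTE ->; rewrite subn0.
Qed.

Section DerivationOfG.

Variables (m : nat) (d : {mpoly algC[m]} -> {mpoly algC[m]}) (g : seq nat -> {mpoly algC[m]}).
Hypothesis dD : {morph d : x y / x + y}.
Hypothesis dM : forall x y, d (x * y) = x * d y + d x * y.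
Hypothesis dC : forall c : algC, d c%:MP = 0.
Hypothesis dX : forall j : nat, (0 < j <= m)%N -> d (xv m j) = xv m j.-1.
Hypothesis g_id : forall n l : nat, (1 <= l <= n)%N -> (n <= m)%N -> g_identity g n l.

#[local] HB.instance Definition _ := GRing.isNmodMorphism.Build _ _ d (derivation0 dD, dD).

Lemma derivation_xv (j : nat) : (j <= m)%N -> d (xv m j) = xv m j.-1.
Proof. by case: j => [_|j j_le_m]; [exact: derivation0 | exact: dX]. Qed.

Lemma derivation_xvprod (l : nat) (mu : 'X_{1..l}) : (mdeg mu <= m)%N ->
  d (xvprod m mu) = \sum_(p < l | (U_(p) <= mu)%MM) xvprod m (mu - U_(p))%MM.
Proof.
move=> deg_mu; rewrite {1}/xvprod derivation_big_prod ?index_enum_uniq // [RHS]big_mkcond /=.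
apply: eq_bigr => p _; rewrite xvprod_subU derivation_xv; last first.
  exact: leq_trans (mnm_le_mdeg mu p) deg_mu.
by rewrite lep1mP; case: eqP => [->|]; rewrite ?mul0r.
Qed.

Lemma map_mpoly_derivation_genS (n l : nat) : (0 < n <= m)%N ->
  map_mpoly d (genS m n l) = mesym l _ 1 * genS m n.-1 l.
Proof.
case/andP => n_gt0 n_le_m; apply/mpolyP => mu.
rewrite mcoeff_map_mpoly /= mcoeff_genS mesym1E mulr_suml raddf_sum /=.
under [RHS]eq_bigr do rewrite mcoeffXM mcoeff_genS.
case: eqP => [deg_mu | deg_mu].
  rewrite derivation_xvprod ?deg_mu // big_mkcond; apply: eq_bigr => p _.
  by case: ifP => // le_p_mu; rewrite -deg_mu (mdeg_subU le_p_mu) eqxx.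
rewrite derivation0 // big1 // => p _; case: ifP => // le_p_mu; rewrite ifN //.
by apply/eqP => deg_mu'; apply: deg_mu; rewrite (mdeg_subU le_p_mu) deg_mu' prednK.
Qed.

Lemma map_mpoly_derivation_gpoly (n l : nat) (c : seq nat -> {mpoly algC[m]}) :
  map_mpoly d (gpoly n l c) = gpoly n l (d \o c).
Proof.
rewrite raddf_sum; apply: eq_bigr => t _; rewrite /= map_mpoly_derivationZ // => mu.
by rewrite mcoeffX mulrb (fun_if d) derivation1 // derivation0 // if_same.
Qed.

Lemma genS_gpoly (n l : nat) : (0 < l)%N -> (n <= m)%N ->
  genS m n l = gpoly n l g \mPo mesyms _ l.
Proof.
move=> l_gt0 n_le_m; case: (leqP l n) => [l_le_n | n_lt_l].
  by rewrite gpoly_comp_mesyms; apply: g_id; rewrite ?l_gt0.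
by rewrite genS_eq0 // gpoly_eq0 // comp_mpoly0.
Qed.

Lemma gpoly_derivation (n l : nat) : (0 < n <= m)%N ->
  gpoly n l.+1 (d \o g) = 'X_ord0 * gpoly n.-1 l.+1 g.
Proof.
move=> n_range; have /andP[_ n_le_m] := n_range.
apply: (@msym_fundamental_un _ {mpoly algC[m]}); rewrite -/(mesyms _ _).
rewrite -map_mpoly_derivation_gpoly -(map_mpoly_derivation_comp_mesyms dD dM _ dC).
rewrite -(genS_gpoly (ltn0Sn l) n_le_m) (map_mpoly_derivation_genS l.+1 n_range).
rewrite (genS_gpoly (ltn0Sn l) (leq_trans (leq_pred n) n_le_m)) rmorphM /=.
by rewrite comp_mpolyXU -tnth_nth tnth_mktuple.
Qed.

Lemma derivation_gE (n l : nat) (beta : seq nat) : (0 < n <= m)%N -> inB n l.+1 beta ->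
  d (g beta) = if nth 0 beta 0 == 0%N then 0
               else (gpoly n.-1 l.+1 g)@_(mnm_of_seq l.+1 (decr_head beta)).
Proof.
move=> n_range betaB.
rewrite -[d (g beta)]/((d \o g) beta) -(mcoeff_gpoly _ betaB) (gpoly_derivation l n_range).
rewrite mcoeffXM lep1mP mnmE; case: eqP => // _; congr (_@_ _).
apply/mnmP => j; rewrite mnmBE mnm1E !mnmE /decr_head.
by case: j => -[|j] j_lt //=; rewrite ?subn1 ?subn0 ?nth_behead.
Qed.

End DerivationOfG.

Theorem lemma3p2 (m : nat) (d : {mpoly algC[m]} -> {mpoly algC[m]})
  (g : seq nat -> {mpoly algC[m]}) :
  (forall p q, d (p + q) = d p + d q) ->
  (forall p q, d (p * q) = p * d q + d p * q) ->
  (forall c : algC, d c%:MP = 0) ->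
  (forall j : nat, (0 < j <= m)%N -> d (xv m j) = xv m j.-1) ->
  (forall n l : nat, (1 <= l <= n)%N -> (n <= m)%N -> g_identity g n l) ->
  forall (n l i : nat) (beta : seq nat),
    (1 <= l <= n)%N -> (n <= m)%N -> inBi n l i beta ->
    d (g beta) = if i == 0%N then 0 else g (decr_head beta).
Proof.
move=> dD dM dC dX g_id n [//|l] i beta /andP[_ l_lt_n] n_le_m.
have n_range : (0 < n <= m)%N by rewrite n_le_m (leq_trans _ l_lt_n).
rewrite /inBi; case: ifP => [l_gt0 /andP[betaB /eqP beta_i] | _].
  rewrite (derivation_gE dD dM dC dX g_id n_range betaB) beta_i.
  case: eqP => // /eqP i_neq0; rewrite mcoeff_gpoly // inB_decr_head //.
  by rewrite beta_i lt0n.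
case/andP=> /andP[/eqP[l0] /eqP beta_eq] /eqP n_eq; subst l beta n.
rewrite (derivation_gE dD dM dC dX g_id n_range (inB_singleton i)) /=.
case: i n_range {l_lt_n n_le_m} => [|i] n_range; first by rewrite gpoly_eq0 ?mcoeff0.
by rewrite mcoeff_gpoly ?inB_singleton.
Qed.
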